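(* Let $(X,\tau)$ be an extended locally convex space and let $\tau_F$ be its finest locally convex topology. Then a linear functional on $X$ is continuous with respect to $\tau$ if and only if it is continuous with respect to $\tau_F$; that is, $(X,\tau)^*=(X,\tau_F)^*$.
   Context: Let $X$ be a vector space over $\mathbb{R}$ or $\mathbb{C}$. An extended seminorm on $X$ is a map $\rho:X\to[0,\infty]$ with $\rho(\alpha x)=|\alpha|\rho(x)$ and $\rho(x+y)\le\rho(x)+\rho(y)$. An extended locally convex space $(X,\tau)$ is a vector space with the topology $\tau$ induced by a family $\{\rho_i\}$ of extended seminorms (neighborhood base at $x_0$: sets $\{x:\max_{i\in J}\rho_i(x-x_0)<\varepsilon\}$, $J$ finite, $\varepsilon>0$). A locally convex topology is one induced in this way by finite-valued seminorms. The finest locally convex topology $\tau_F$ of $(X,\tau)$ is the locally convex topology on $X$ with $\tau_F\subseteq\tau$ such that every locally convex topology $\sigma$ on $X$ with $\sigma\subseteq\tau$ satisfies $\sigma\subseteq\tau_F$ (it exists and is unique). $(X,\tau)^*$ denotes the set of $\tau$-continuous linear functionals on $X$. *)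

From HB Require Import structures.
From mathcomp Require Import all_boot all_order all_algebra.
From mathcomp Require Import all_classical all_reals all_analysis.
Set Implicit Arguments. Unset Strict Implicit. Unset Printing Implicit Defensive.
Import Order.TTheory GRing.Theory Num.Theory.
Import numFieldNormedType.Exports.
Local Open Scope classical_set_scope.
Local Open Scope ring_scope.
Local Open Scope ereal_scope.

(* Scalars: an arbitrary numFieldType K (covers R and C).  A "topology" on X is
   given by its family of open sets [tau : set (set X)]. *)

Section Defs.
Variables (K : numFieldType) (X : lmodType K).

Definition ext_seminorm (rho : X -> \bar K) : Prop :=
  [/\ forall x, 0 <= rho x,
      forall (a : K) x, rho (a *: x) = (`|a|)%:E * rho x
    & forall x y, rho (x + y)%R <= rho x + rho y].

Definition induced_topology (I : Type) (rho : I -> X -> \bar K) : set (set X) :=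
  [set U | forall x0, U x0 ->
     exists (J : set I) (eps : K), [/\ finite_set J, (0 < eps)%R &
       [set x | forall i, J i -> rho i (x - x0)%R < eps%:E] `<=` U]].

Definition ext_locally_convex_topology (tau : set (set X)) : Prop :=
  exists (I : Type) (rho : I -> X -> \bar K),
    (forall i, ext_seminorm (rho i)) /\ tau = induced_topology rho.

Definition locally_convex_topology (sigma : set (set X)) : Prop :=
  exists (I : Type) (rho : I -> X -> \bar K),
    [/\ forall i, ext_seminorm (rho i),
        forall i x, rho i x < +oo
      & sigma = induced_topology rho].

Definition finest_lc_topology (tau tauF : set (set X)) : Prop :=
  [/\ locally_convex_topology tauF, tauF `<=` tau &
      forall sigma, locally_convex_topology sigma -> sigma `<=` tau ->
        sigma `<=` tauF].

Definition tcontinuous (tau : set (set X)) (f : X -> K) : Prop :=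
  forall V : set K, open V -> tau (f @^-1` V).

End Defs.

From HB Require Import structures.
From mathcomp Require Import all_boot all_order all_algebra.
From mathcomp Require Import all_classical all_reals all_analysis.
Import Order.TTheory GRing.Theory Num.Theory.
Import numFieldNormedType.Exports.
Local Open Scope classical_set_scope.
Local Open Scope ring_scope.

(* A linear functional f gives the finite seminorm |f|.  When f is
   tau-continuous, the locally convex topology generated by |f| is coarser
   than tau, hence coarser than tauF by maximality; and f is continuous for
   it, so f is tauF-continuous.  The converse holds since tauF is coarser
   than tau. *)

Section ScalarSeminorm.
Context {K : numFieldType} {X : lmodType K}.

Definition scalar_seminorm (f : {scalar X}) : unit -> X -> \bar K :=
  fun _ x => (`|f x|)%:E.

Lemma tcontinuous_coarser {sigma tau : set (set X)} {f : X -> K} :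
  sigma `<=` tau -> tcontinuous sigma f -> tcontinuous tau f.
Proof. by move=> sub fc V oV; apply/sub/fc. Qed.

Lemma ext_seminorm_scalar (f : {scalar X}) :
  ext_seminorm (scalar_seminorm f tt).
Proof.
split=> [x | a x | x y]; rewrite /scalar_seminorm.
- by rewrite lee_fin.
- by rewrite linearZ /= normrM EFinM.
- by rewrite raddfD /= lee_fin ler_normD.
Qed.

Lemma locally_convex_scalar_seminorm (f : {scalar X}) :
  locally_convex_topology (induced_topology (scalar_seminorm f)).
Proof.
exists unit, (scalar_seminorm f); split => // [[] | i x].
- exact: ext_seminorm_scalar.
- by rewrite /scalar_seminorm real_ltry normr_real.
Qed.

Lemma tcontinuous_scalar_seminorm (f : {scalar X}) :
  tcontinuous (induced_topology (scalar_seminorm f)) f.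
Proof.
move=> V oV x0 Vx0.
have /nbhs_ballP [eps e0 bV] : nbhs (f x0) V by exact: open_nbhs_nbhs.
exists [set tt], eps; split => // x fx; apply: bV.
rewrite -ball_normE /= distrC -raddfB.
by have := fx tt erefl; rewrite /scalar_seminorm lte_fin.
Qed.

Lemma scalar_seminorm_topology_coarser (I : Type) (rho : I -> X -> \bar K)
    (f : {scalar X}) :
  tcontinuous (induced_topology rho) f ->
  induced_topology (scalar_seminorm f) `<=` induced_topology rho.
Proof.
move=> fc U oU x0 Ux0.
have [J0 [eps [_ e0 ballU]]] := oU x0 Ux0.
have [|J [eps' [fJ e0' sJ]]] := fc _ (ball_open (f x0) eps) x0; first exact: ballxx.
exists J, eps'; split => // x /sJ fx; apply: ballU => i _.
by move: fx; rewrite /= -ball_normE /= /scalar_seminorm lte_fin raddfB /= distrC.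
Qed.

End ScalarSeminorm.

Theorem corollary3p6 (K : numFieldType) (X : lmodType K)
  (tau tauF : set (set X)) :
  ext_locally_convex_topology tau ->
  finest_lc_topology tau tauF ->
  forall f : {scalar X},
    tcontinuous tau f <-> tcontinuous tauF f.
Proof.
move=> [I [rho [_ ->]]] [_ tauF_tau tauF_max] f.
split; last exact: tcontinuous_coarser.
move=> fc.
have coarser : induced_topology (scalar_seminorm f) `<=` tauF.
  apply: tauF_max; first exact: locally_convex_scalar_seminorm.
  exact: scalar_seminorm_topology_coarser.
exact: tcontinuous_coarser coarser (tcontinuous_scalar_seminorm f).
Qed.
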